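(* Let $\mathcal{J}$ be a simple input set for Machine Covering on $m$ machines. Then for every arrival order of $\mathcal{J}$, the Greedy-strategy produces a schedule with minimum load at least $\frac{\mathrm{OPT}(\mathcal{J})}{100\sqrt[4]{m}}$.
   Context: Machine Covering: $n$ jobs with non-negative sizes are assigned to $m$ identical parallel machines, maximizing the minimum machine load; $\mathrm{OPT}(\mathcal{J})$ is the optimal offline minimum load. The Greedy-strategy processes jobs in arrival order and assigns each to a currently least loaded machine (ties broken arbitrarily). A job is called large if its size exceeds $\frac{\mathrm{OPT}(\mathcal{J})}{100\sqrt[4]{m}}$ and small otherwise; $k$ is the number of large jobs in $\mathcal{J}$. The input set $\mathcal{J}$ is called simple if $n<m$, or $k\ge m$, or $k\le m-\frac{m^{3/4}}{50}$. *)

From HB Require Import structures.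
From mathcomp Require Import all_boot all_order all_algebra.
Set Implicit Arguments. Unset Strict Implicit. Unset Printing Implicit Defensive.
Import Order.TTheory GRing.Theory Num.Theory.
Local Open Scope ring_scope.

Section MachineCovering.
Variable R : rcfType.

(* An input (multi)set of jobs is a sequence of sizes; a sequence also fixes
   an arrival order. An assignment maps job indices to machines 'I_m. *)

Definition load (s : seq R) (m : nat) (f : 'I_(size s) -> 'I_m) (i : 'I_m) : R :=
  \sum_(j < size s | f j == i) s`_j.

Definition load_before (s : seq R) (m : nat) (f : 'I_(size s) -> 'I_m)
    (t : nat) (i : 'I_m) : R :=
  \sum_(j < size s | (j < t)%N && (f j == i)) s`_j.

(* minimum machine load; the default value (total size) is irrelevant when
   m > 0 and sizes are nonnegative, since every machine load is <= total *)
Definition min_load (s : seq R) (m : nat) (f : 'I_(size s) -> 'I_m) : R :=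
  let tot := \sum_(x <- s) x in
  \big[Num.min/tot]_(i < m) load f i.

(* optimal offline minimum load; the default 0 is irrelevant as min loads
   are nonnegative for nonnegative sizes *)
Definition OPT (s : seq R) (m : nat) : R :=
  \big[Num.max/0]_(f : {ffun 'I_(size s) -> 'I_m}) min_load f.

(* f is a schedule the Greedy-strategy may produce when jobs arrive in the
   order of s: each job goes to a currently least loaded machine (arbitrary
   tie-breaking). *)
Definition greedy_schedule (s : seq R) (m : nat) (f : 'I_(size s) -> 'I_m) : Prop :=
  forall (t : 'I_(size s)) (i : 'I_m), load_before f t (f t) <= load_before f t i.

Definition root4 (m : nat) : R := Num.sqrt (Num.sqrt m%:R).

Definition threshold (J : seq R) (m : nat) : R := OPT J m / (100 * root4 m).

Definition num_large (J : seq R) (m : nat) : nat :=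
  count (fun x => threshold J m < x) J.

(* m^(3/4) = m / m^(1/4) *)
Definition simple_input (J : seq R) (m : nat) : Prop :=
  (size J < m)%N \/ (m <= num_large J m)%N \/
  (num_large J m)%:R <= m%:R - (m%:R / root4 m) / 50.

End MachineCovering.

(* Suppose Greedy leaves a machine i with load below T = OPT / (100 m^(1/4)).
   Greedy preferred every job's machine to i, so each job arrived on a machine
   of load < T.  Hence no two jobs larger than T share a machine and none lies
   on i, so there are fewer than m large jobs; and on every machine the small
   jobs (size <= T) add up to less than 2T, the last of them contributing at
   most T.  If n < m then OPT = 0.  If k >= m the first bound fails.
   Otherwise an optimal schedule has at least m - k machines carrying only
   small jobs, each of load >= OPT, so (m - k) OPT <= small volume < 2mT
   = m^(3/4) OPT / 50, contradicting k <= m - m^(3/4) / 50. *)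

From HB Require Import structures.
From mathcomp Require Import all_boot all_order all_algebra.
From mathcomp Require Import ring lra zify.
Set Implicit Arguments. Unset Strict Implicit. Unset Printing Implicit Defensive.
Import Order.TTheory GRing.Theory Num.Theory.
Local Open Scope ring_scope.

Lemma ler_sum_subpred (R : numDomainType) (I : finType) (P Q : pred I)
    (F : I -> R) :
  (forall t, P t -> Q t) -> (forall t, Q t -> 0 <= F t) ->
  \sum_(t | P t) F t <= \sum_(t | Q t) F t.
Proof.
move=> PQ F_ge0; rewrite [leRHS](bigID P) /=.
under [X in _ <= X + _]eq_bigl => t do rewrite (andb_idl (PQ t)).
by rewrite lerDl sumr_ge0 // => t /andP[/F_ge0].
Qed.

Lemma count_card_nth (T : Type) (x0 : T) (s : seq T) (p : pred T) :
  count p s = #|[set t : 'I_(size s) | p (nth x0 s t)]|.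
Proof.
rewrite -sum1_count (big_nth x0) big_mkord -sum1_card.
by apply: eq_bigl => t; rewrite inE.
Qed.

Lemma sum_seq_ord (V : nmodType) (s : seq V) (P : pred V) :
  \sum_(x <- s | P x) x = \sum_(t < size s | P s`_t) s`_t.
Proof. by rewrite (big_nth 0) big_mkord. Qed.

Section Loads.
Variables (R : rcfType) (m : nat) (s : seq R).
Hypothesis s_ge0 : {in s, forall x, 0 <= x}.

Let nth_ge0 (t : 'I_(size s)) : 0 <= s`_t.
Proof. exact/s_ge0/mem_nth. Qed.

Variable f : 'I_(size s) -> 'I_m.

Lemma load_ge0 i : 0 <= load f i.
Proof. exact: sumr_ge0. Qed.

Lemma load_le_sum i : load f i <= \sum_(x <- s) x.
Proof. by rewrite (sum_seq_ord _ predT); apply: ler_sum_subpred. Qed.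

Lemma le_min_load x : (0 < m)%N -> (forall i, x <= load f i) -> x <= min_load f.
Proof.
move=> m_gt0 x_le; apply: le_bigmin => [|i _]; last exact: x_le.
exact: le_trans (x_le (Ordinal m_gt0)) (load_le_sum _).
Qed.

Lemma load_before_le_load (t : nat) i : load_before f t i <= load f i.
Proof. by apply: ler_sum_subpred => // u /andP[]. Qed.

Lemma nth_le_load (t : 'I_(size s)) : s`_t <= load f (f t).
Proof. by rewrite /load (bigD1 t) //= lerDl sumr_ge0. Qed.

Lemma nth_le_load_before (u : 'I_(size s)) (t : nat) :
  (u < t)%N -> s`_u <= load_before f t (f u).
Proof.
by move=> ut; rewrite /load_before (bigD1 u) /= ?ut ?eqxx // lerDl sumr_ge0.
Qed.

Section Greedy.
Hypothesis greedy : greedy_schedule f.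
Variables (x : R) (i0 : 'I_m).
Hypothesis load_i0_lt : load f i0 < x.

Lemma greedy_load_before_lt (t : 'I_(size s)) : load_before f t (f t) < x.
Proof.
exact: le_lt_trans (greedy t i0) (le_lt_trans (load_before_le_load _ _) _).
Qed.

Lemma greedy_large_injective :
  {in [set t : 'I_(size s) | x < s`_t] &, injective f}.
Proof.
have no_earlier (u v : 'I_(size s)) : (u < v)%N -> x < s`_u -> f u != f v.
  move=> uv large_u; apply/eqP => fuv.
  have := nth_le_load_before uv; rewrite fuv.
  by have := greedy_load_before_lt v; lra.
move=> u v; rewrite !inE => large_u large_v fuv.
case: (ltngtP u v) => [uv|vu|/val_inj //].
  by move: (no_earlier _ _ uv large_u); rewrite fuv eqxx.
by move: (no_earlier _ _ vu large_v); rewrite fuv eqxx.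
Qed.

Lemma greedy_large_neq (t : 'I_(size s)) : x < s`_t -> f t != i0.
Proof.
move=> large_t; apply: contraTneq (nth_le_load t) => ->.
by rewrite -ltNge (lt_trans load_i0_lt).
Qed.

Lemma greedy_count_large_lt : (count (fun y : R => (x < y)%R) s < m)%N.
Proof.
rewrite (count_card_nth 0) -(card_in_imset greedy_large_injective).
have : (#|f @: [set t : 'I_(size s) | (x < s`_t)%R]| <= #|[set~ i0]|)%N.
  apply/subset_leq_card/subsetP => y /imsetP[t]; rewrite inE => large_t ->.
  by rewrite !inE greedy_large_neq.
by rewrite cardsC1 card_ord; have := ltn_ord i0; lia.
Qed.

Lemma greedy_small_on_machine_lt j :
  \sum_(t < size s | (s`_t <= x) && (f t == j)) s`_t < 2 * x.
Proof.
have x_gt0 : 0 < x := le_lt_trans (load_ge0 i0) load_i0_lt.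
pose on_j (t : 'I_(size s)) := (s`_t <= x) && (f t == j).
case: (pickP on_j) => [t0 on_j_t0|none]; last by rewrite big_pred0 // mulr_gt0.
have [tl /andP[small_tl /eqP ftl] tl_last] := @arg_maxnP _ t0 on_j val on_j_t0.
rewrite (bigD1 tl) /=; last by rewrite small_tl ftl eqxx.
have : \sum_(t < size s | (s`_t <= x) && (f t == j) && (t != tl)) s`_t
         <= load_before f tl (f tl).
  apply: ler_sum_subpred => // t /andP[/andP[small_t /eqP ft] t_ne].
  rewrite ftl ft eqxx andbT ltn_neqAle t_ne /=.
  by apply: tl_last; rewrite /on_j small_t ft eqxx.
by have := greedy_load_before_lt tl; lra.
Qed.

Lemma greedy_small_volume_lt : \sum_(y <- s | y <= x) y < m%:R * (2 * x).
Proof.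
rewrite sum_seq_ord (partition_big f predT) //=.
rewrite mulr_natl -[m in _ *+ m]card_ord -sumr_const.
apply: ltr_sum => [|j _]; last exact: greedy_small_on_machine_lt.
by apply/hasP; exists i0; rewrite ?mem_index_enum.
Qed.

End Greedy.

End Loads.

Section Optimum.
Variables (R : rcfType) (m : nat) (J : seq R).

Lemma OPT_ge0 : 0 <= OPT J m.
Proof. exact: bigmax_ge_id. Qed.

Lemma OPT_le0_few_jobs : (size J < m)%N -> OPT J m <= 0.
Proof.
move=> few_jobs; apply: bigmax_le => // g _.
have [j idle | all_busy] := pickP (fun j => j \notin codom g).
  apply: le_trans (bigmin_le _ j _) _.
  rewrite /load big_pred0 // => t; apply: contraNF idle => /eqP <-.
  exact: codom_f.
have : (#|'I_m| <= #|codom g|)%N.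
  by apply/subset_leq_card/subsetP => j _; have /negbFE := all_busy j.
move/leq_trans/(_ (card_size _)); rewrite card_ord size_codom card_ord.
by rewrite leqNgt few_jobs.
Qed.

Hypothesis J_ge0 : {in J, forall x, 0 <= x}.
Hypothesis m_gt0 : (0 < m)%N.

Lemma exists_optimal_schedule :
  exists g : 'I_(size J) -> 'I_m, forall j, OPT J m <= load g j.
Proof.
have [g _ ->] :
    {g : {ffun 'I_(size J) -> 'I_m} | g \in predT & OPT J m = min_load g}.
  apply: (eq_bigmax [ffun=> Ordinal m_gt0]) => // g _.
  exact/(le_min_load J_ge0 m_gt0)/load_ge0.
by exists g => j; apply: bigmin_le.
Qed.

Lemma OPT_mul_le_small_volume x :
  (m - count (fun y : R => (x < y)%R) J)%:R * OPT J m <= \sum_(y <- J | y <= x) y.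
Proof.
have [g OPT_le_load] := exists_optimal_schedule.
pose large := [set t : 'I_(size J) | x < J`_t].
pose free := ~: (g @: large).
have card_free : (m - count (fun y : R => (x < y)%R) J <= #|free|)%N.
  have := cardsC (g @: large); have := leq_imset_card g large.
  by rewrite card_ord (count_card_nth 0) /= -/large -/free; lia.
have OPT_le_free j : j \in free ->
    OPT J m <= \sum_(t < size J | (J`_t <= x) && (g t == j)) J`_t.
  rewrite inE => j_free; apply: le_trans (OPT_le_load j) _.
  apply: ler_sum_subpred => [t /eqP gtj|t _]; last exact/J_ge0/mem_nth.
  rewrite gtj eqxx andbT leNgt; apply: contra j_free => large_t.
  by apply/imsetP; exists t; rewrite ?inE.
rewrite sum_seq_ord (partition_big g predT) //=.
apply: (@le_trans _ _ (#|free|%:R * OPT J m)).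
  by rewrite ler_wpM2r ?OPT_ge0 ?ler_nat.
rewrite mulr_natl -sumr_const; apply: le_trans (ler_sum _ OPT_le_free) _.
by apply: ler_sum_subpred => // j _; apply: sumr_ge0 => t _; exact/J_ge0/mem_nth.
Qed.

End Optimum.

Theorem proposition6 (R : rcfType) (m : nat) (J : seq R) :
  (0 < m)%N ->
  (forall x, x \in J -> 0 <= x) ->
  simple_input J m ->
  forall (s : seq R), perm_eq s J ->
  forall (f : 'I_(size s) -> 'I_m), greedy_schedule f ->
  threshold J m <= min_load f.
Proof.
move=> m_gt0 J_ge0 simple s perm_sJ f greedy.
have s_ge0 : {in s, forall x, 0 <= x}.
  by move=> x; rewrite (perm_mem perm_sJ); apply: J_ge0.
set T := threshold J m.
apply: (le_min_load s_ge0 m_gt0) => i; rewrite leNgt; apply/negP => load_i_lt.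
have root4_gt0 : 0 < root4 R m by rewrite /root4 !sqrtr_gt0 ltr0n.
have [OPT_le0 | OPT_gt0] := lerP (OPT J m) 0.
  have : T <= 0 by rewrite /T /threshold mulr_le0_ge0 // invr_ge0 mulr_ge0 // ltW.
  by have := load_ge0 s_ge0 f i; lra.
case: simple => [few_jobs | [many_large | few_large]].
- by have := OPT_le0_few_jobs few_jobs; lra.
- have := greedy_count_large_lt s_ge0 greedy load_i_lt.
  by rewrite (permP perm_sJ) ltnNge many_large.
- set k := num_large J m in few_large.
  have := greedy_small_volume_lt s_ge0 greedy load_i_lt.
  rewrite (perm_big _ perm_sJ).
  have := OPT_mul_le_small_volume J_ge0 m_gt0 T; rewrite -/k.
  have frac_ge0 : 0 <= m%:R / root4 R m / 50 by rewrite !divr_ge0 // ltW.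
  have k_le_m : (k <= m)%N by rewrite -(ler_nat R); lra.
  have : m%:R / root4 R m / 50 * OPT J m <= (m - k)%:R * OPT J m.
    by apply: ler_wpM2r; [exact: ltW | rewrite natrB //; lra].
  have -> : m%:R * (2 * T) = m%:R / root4 R m / 50 * OPT J m.
    by rewrite /T /threshold; field; rewrite gt_eqF.
  lra.
Qed.
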